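(* Suppose the bandwidth is insufficient, i.e. $BW_{max,EUT}\le\sum_{i\in S_{EUT}}\bar F^{-1}_{B_i}(\lambda_i;b^* )$ with $\lambda_i=w^{-1}(r_{EUT}(b^* )/h_i(b^* ))$, and all users under-weight the service guarantee, i.e. $w(\bar F_{B_i}(b^*;BW_{i,EUT}))<\bar F_{B_i}(b^*;BW_{i,EUT})$ for all $i\in S_{EUT}$. Suppose the SP keeps the strict radio-resource-management constraints (same user set $S_{EUT}$, same rate $b^*$, same total bandwidth $BW_{max,EUT}$ and same allocation $(BW_{i,EUT})$) and charges a new price $r_{PT}(b^* )$ such that every user in $S_{EUT}$ accepts under prospect theory. Then $$r_{EUT}(b^* )-r_{PT}(b^* )>L_{RRM}:=\max_{i\in S_{EUT}}\Big\{r_{EUT}(b^* )-h_i(b^* )\,w\big(\bar F_{B_i}(b^*;BW_{i,EUT})\big)\Big\}\ge 0,$$ so the SP's revenue per user decreases by more than $L_{RRM}$ relative to the EUT equilibrium.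
   Context: A service provider (SP) serves a finite set $S_{EUT}$ of end-users. For each user $i$ there is a benefit function $h_i:(0,\infty)\to(0,\infty)$ and, for each rate $b>0$, a service-guarantee function $BW\mapsto\bar F_{B_i}(b;BW)$ from $[0,\infty)$ to $[0,1)$, continuous and strictly increasing with $\bar F_{B_i}(b;0)=0$. The EUT pricing function is $r_{EUT}:(0,\infty)\to(0,\infty)$. Unit costs $c_1>0$ (rate) and $c_3>0$ (bandwidth); when a set $S$ of users all accept an offer at rate $b$ and price $r$ with bandwidths summing to $BW_{tot}$, the SP's revenue is $|S|(r-c_1b)-c_3BW_{tot}$. A probability weighting function $w:[0,1]\to[0,1]$ is a continuous strictly increasing bijection (e.g. Prelec's $w(p)=\exp(-(-\ln p)^\alpha)$, $\alpha\in(0,1]$). A user offered rate $b$ at price $r$ with bandwidth $BW_i$ accepts under EUT iff $h_i(b)\bar F_{B_i}(b;BW_i)>r$, and under prospect theory (PT) iff $h_i(b)\,w(\bar F_{B_i}(b;BW_i))>r$. Notation: for $q\ge0$, $\bar F^{-1}_{B_i}(q;b)$ is the unique $BW\ge0$ with $\bar F_{B_i}(b;BW)=q$ if $q$ lies in the range of $\bar F_{B_i}(b;\cdot)$ and $+\infty$ otherwise; $w^{-1}(x):=+\infty$ for $x>1$ and $\bar F^{-1}_{B_i}(+\infty;b):=+\infty$. EUT equilibrium data: a rate $b^*=b^*_{1,EUT}>0$ and bandwidths $BW_{i,EUT}\ge0$, $i\in S_{EUT}$, with $\sum_{i}BW_{i,EUT}=BW_{max,EUT}$, such that every $i\in S_{EUT}$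 accepts under EUT the offer of rate $b^*$ at price $r_{EUT}(b^* )$ with bandwidth $BW_{i,EUT}$. *)

From Stdlib Require Import Reals List Classical ClassicalEpsilon.
Open Scope R_scope.

(* Extended nonnegative values: [Some x] is a real, [None] is +infinity. *)
Definition ext := option R.

Fixpoint esum (l : list ext) : ext :=
  match l with
  | nil => Some 0
  | e :: l' =>
      match e, esum l' with
      | Some a, Some b => Some (a + b)
      | _, _ => None
      end
  end.

Definition ext_le (a : R) (e : ext) : Prop :=
  match e with None => True | Some b => a <= b end.

(* w^{-1}(x): the p in [0,1] with w p = x, and +infinity if none exists
   (in particular for x > 1). *)
Definition winv (w : R -> R) (x : R) : ext :=
  match excluded_middle_informative (exists p, 0 <= p <= 1 /\ w p = x) with
  | left H => Some (proj1_sig (constructive_indefinite_description _ H))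
  | right _ => None
  end.

(* \bar F^{-1}(q;b) for the function F = \bar F_{B_i}(b; .):
   the BW >= 0 with F BW = q if q is in the range, +infinity otherwise,
   and +infinity for q = +infinity. *)
Definition Finv (F : R -> R) (q : ext) : ext :=
  match q with
  | None => None
  | Some q0 =>
      match excluded_middle_informative (exists BW, 0 <= BW /\ F BW = q0) with
      | left H => Some (proj1_sig (constructive_indefinite_description _ H))
      | right _ => None
      end
  end.

Fixpoint lsum (l : list R) : R :=
  match l with nil => 0 | x :: l' => x + lsum l' end.

(* Maximum of a nonempty list (value 0 on the empty list, never used). *)
Fixpoint max_list (l : list R) : R :=
  match l with
  | nil => 0
  | x :: nil => x
  | x :: l' => Rmax x (max_list l')
  end.

Definition revenue (c1 c3 : R) (nusers : nat) (r b BWtot : R) : R :=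
  INR nusers * (r - c1 * b) - c3 * BWtot.

From Stdlib Require Import Reals List Lra Lia ClassicalEpsilon.
Open Scope R_scope.

(* Each user accepts [r_PT] under prospect theory, so [r_EUT - r_PT] exceeds
   every [r_EUT - h_i w(F_i(BW_i))], hence their maximum [L_RRM].  If [L_RRM]
   were negative, every user would already accept [r_EUT] under prospect theory:
   [w(λ_i) = r_EUT / h_i < w(F_i(BW_i))], so [λ_i < F_i(BW_i)] and
   [F_i^{-1}(λ_i) < BW_i] by monotonicity (the inverse exists by the
   intermediate value theorem).  Summing over the users gives
   [Σ F_i^{-1}(λ_i) < BW_max], contradicting insufficient bandwidth.  The cost
   terms of the revenue are the same for both prices, so the loss per user is
   the price difference. *)

Lemma Rabs_Rmax0_sub x y : Rabs (Rmax 0 y - Rmax 0 x) <= Rabs (y - x).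
Proof. unfold Rmax, Rabs; repeat destruct Rle_dec; repeat destruct Rcase_abs; lra. Qed.

Lemma continuity_comp_Rmax0 (F : R -> R) :
  (forall x, 0 <= x -> continue_in F (fun y => 0 <= y) x) ->
  continuity (fun y => F (Rmax 0 y)).
Proof.
  intros HF x eps Heps.
  destruct (HF _ (Rmax_l 0 x) eps Heps) as [d [Hd H]].
  exists d; split; [exact Hd |].
  intros y [_ Hy]; simpl in *; unfold R_dist in *.
  destruct (Req_dec (Rmax 0 y) (Rmax 0 x)) as [E | E].
  - rewrite E, Rminus_diag, Rabs_R0; lra.
  - apply (H (Rmax 0 y)); split.
    + split; [apply Rmax_l | intro; apply E; congruence].
    + simpl; unfold R_dist; pose proof (Rabs_Rmax0_sub x y); lra.
Qed.

Lemma IVT_from_0 (F : R -> R) p B :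
  (forall x, 0 <= x -> continue_in F (fun y => 0 <= y) x) ->
  F 0 = 0 -> 0 <= p -> 0 <= B -> p < F B ->
  exists z, 0 <= z <= B /\ F z = p.
Proof.
  intros HF HF0 Hp HB HpB.
  assert (Hc : continuity (fun y => F (Rmax 0 y) - p)).
  { apply continuity_minus; [now apply continuity_comp_Rmax0 |].
    apply continuity_const; intros ? ?; reflexivity. }
  destruct (IVT_cor _ 0 B Hc HB) as [z [Hz Ez]].
  - rewrite !Rmax_right, HF0 by lra; nra.
  - exists z; split; [exact Hz |].
    rewrite Rmax_right in Ez by lra; lra.
Qed.

Lemma winv_spec w x : (exists p, 0 <= p <= 1 /\ w p = x) ->
  exists p, winv w x = Some p /\ 0 <= p <= 1 /\ w p = x.
Proof.
  intros H; unfold winv.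
  destruct (excluded_middle_informative _) as [H' | H']; [| contradiction].
  destruct (constructive_indefinite_description _ H') as [p Hp]; simpl; eauto.
Qed.

Lemma Finv_Some_spec F q : (exists x, 0 <= x /\ F x = q) ->
  exists x, Finv F (Some q) = Some x /\ 0 <= x /\ F x = q.
Proof.
  intros H; unfold Finv.
  destruct (excluded_middle_informative _) as [H' | H']; [| contradiction].
  destruct (constructive_indefinite_description _ H') as [x Hx]; simpl; eauto.
Qed.

Section Inverses.

Variable w : R -> R.
Hypothesis w_range : forall p, 0 <= p <= 1 -> 0 <= w p <= 1.
Hypothesis w_incr : forall p q, 0 <= p -> p < q -> q <= 1 -> w p < w q.
Hypothesis w_surj : forall y, 0 <= y <= 1 -> exists p, 0 <= p <= 1 /\ w p = y.

Lemma winv_lt q y : 0 <= q -> 0 <= y <= 1 -> q < w y ->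
  exists p, winv w q = Some p /\ 0 <= p < y.
Proof.
  intros Hq Hy Hqy.
  assert (Hq1 : 0 <= q <= 1) by (pose proof (w_range y Hy); lra).
  destruct (winv_spec w q (w_surj q Hq1)) as [p [Ep [Hp Hwp]]].
  exists p; split; [exact Ep |].
  destruct (Rlt_or_le p y) as [| [Hyp | <-]]; [lra | |].
  - pose proof (w_incr y p ltac:(lra) Hyp ltac:(lra)); lra.
  - lra.
Qed.

Variable F : R -> R.
Hypothesis F_cont : forall x, 0 <= x -> continue_in F (fun y => 0 <= y) x.
Hypothesis F_0 : F 0 = 0.
Hypothesis F_incr : forall x y, 0 <= x -> x < y -> F x < F y.

Lemma Finv_lt p B : 0 <= p -> 0 <= B -> p < F B ->
  exists x, Finv F (Some p) = Some x /\ x < B.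
Proof.
  intros Hp HB HpB.
  destruct (IVT_from_0 F p B F_cont F_0 Hp HB HpB) as [z [Hz Fz]].
  destruct (Finv_Some_spec F p (ex_intro _ z (conj (proj1 Hz) Fz)))
    as [x [Ex [Hx Fx]]].
  exists x; split; [exact Ex |].
  destruct (Rlt_or_le x B) as [| [HBx | <-]]; [lra | |].
  - pose proof (F_incr B x HB HBx); lra.
  - lra.
Qed.

Lemma Finv_winv_lt (hi r B : R) : 0 < hi -> 0 < r -> 0 <= B -> 0 <= F B <= 1 ->
  r < hi * w (F B) -> exists x, Finv F (winv w (r / hi)) = Some x /\ x < B.
Proof.
  intros Hh Hr HB HFB Hacc.
  assert (Hq : 0 <= r / hi) by (apply Rlt_le, Rdiv_lt_0_compat; lra).
  assert (Hqw : r / hi < w (F B)).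
  { apply Rmult_lt_reg_r with hi; [lra |].
    unfold Rdiv; rewrite Rmult_assoc, Rinv_l by lra; lra. }
  destruct (winv_lt (r / hi) (F B) Hq HFB Hqw) as [p [-> Hp]].
  apply Finv_lt; lra.
Qed.

End Inverses.

Lemma esum_lt_lsum (f : nat -> ext) (g : nat -> R) (l : list nat) :
  (forall i, In i l -> exists x, f i = Some x /\ x < g i) ->
  exists s, esum (map f l) = Some s /\ s <= lsum (map g l) /\
            (l <> nil -> s < lsum (map g l)).
Proof.
  induction l as [| a l IH]; intros H.
  - exists 0; simpl; repeat split; [lra | congruence].
  - destruct IH as [s [Es [Hs _]]]; [intros; apply H; simpl; auto |].
    destruct (H a (or_introl eq_refl)) as [x [Ex Hx]].
    exists (x + s); simpl; rewrite Ex, Es; repeat split; intros; lra.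
Qed.

Lemma max_list_ge x l : In x l -> x <= max_list l.
Proof.
  induction l as [| a [| b l'] IH]; simpl; [tauto | |].
  - intros [<- | []]; lra.
  - intros [<- | Hx]; [apply Rmax_l |].
    eapply Rle_trans; [apply IH, Hx | apply Rmax_r].
Qed.

Lemma max_list_lt c l : l <> nil -> (forall x, In x l -> x < c) -> max_list l < c.
Proof.
  induction l as [| a [| b l'] IH]; intros Hl H; [congruence | |].
  - apply H; simpl; auto.
  - apply Rmax_lub_lt; [apply H; simpl; auto |].
    apply IH; [congruence | intros; apply H; simpl; auto].
Qed.

Lemma revenue_per_user_sub c1 c3 n r1 r2 b BWtot : INR n <> 0 ->
  revenue c1 c3 n r1 b BWtot / INR n - revenue c1 c3 n r2 b BWtot / INR n = r1 - r2.
Proof. intros Hn; unfold revenue; field; exact Hn. Qed.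

Theorem theorem3
  (n : nat) (h : nat -> R -> R) (Fbar : nat -> R -> R -> R)
  (r_EUT : R -> R) (w : R -> R) (c1 c3 : R)
  (bstar BWmax : R) (BW : nat -> R) (r_PT : R)
  (Hn : (1 <= n)%nat)
  (Hc1 : 0 < c1) (Hc3 : 0 < c3)
  (Hh : forall i b, 0 < b -> 0 < h i b)
  (HF_range : forall i b x, 0 < b -> 0 <= x -> 0 <= Fbar i b x < 1)
  (HF_0 : forall i b, 0 < b -> Fbar i b 0 = 0)
  (HF_incr : forall i b x y, 0 < b -> 0 <= x -> x < y -> Fbar i b x < Fbar i b y)
  (HF_cont : forall i b x, 0 < b -> 0 <= x ->
               continue_in (Fbar i b) (fun y => 0 <= y) x)
  (Hr : forall b, 0 < b -> 0 < r_EUT b)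
  (Hw_range : forall p, 0 <= p <= 1 -> 0 <= w p <= 1)
  (Hw_incr : forall p q, 0 <= p -> p < q -> q <= 1 -> w p < w q)
  (Hw_surj : forall y, 0 <= y <= 1 -> exists p, 0 <= p <= 1 /\ w p = y)
  (Hw_cont : forall p, 0 <= p <= 1 -> continue_in w (fun q => 0 <= q <= 1) p)
  (Hb : 0 < bstar)
  (HBW : forall i, (i < n)%nat -> 0 <= BW i)
  (HBWmax : BWmax = lsum (map BW (seq 0 n)))
  (HEUT : forall i, (i < n)%nat ->
            h i bstar * Fbar i bstar (BW i) > r_EUT bstar)
  (Hinsuff : ext_le BWmax
               (esum (map (fun i => Finv (Fbar i bstar)
                                         (winv w (r_EUT bstar / h i bstar)))
                          (seq 0 n))))
  (Hunder : forall i, (i < n)%nat ->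
              w (Fbar i bstar (BW i)) < Fbar i bstar (BW i))
  (HPT : forall i, (i < n)%nat ->
           h i bstar * w (Fbar i bstar (BW i)) > r_PT) :
  let L_RRM := max_list (map (fun i => r_EUT bstar - h i bstar * w (Fbar i bstar (BW i)))
                             (seq 0 n)) in
  r_EUT bstar - r_PT > L_RRM /\ L_RRM >= 0 /\
  revenue c1 c3 n (r_EUT bstar) bstar BWmax / INR n
    - revenue c1 c3 n r_PT bstar BWmax / INR n > L_RRM.
Proof.
  intros L.
  assert (Hseq : seq 0 n <> nil) by (destruct n; [lia | discriminate]).
  assert (Hloss : r_EUT bstar - r_PT > L).
  { apply max_list_lt; [now destruct (seq 0 n) |].
    intros x [i [<- Hi%in_seq]]%in_map_iff.
    specialize (HPT i ltac:(lia)); lra. }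
  split; [exact Hloss | split].
  - apply Rnot_lt_ge; intros HL.
    destruct (esum_lt_lsum (fun i => Finv (Fbar i bstar) (winv w (r_EUT bstar / h i bstar)))
                BW (seq 0 n)) as [s [Es [_ Hs]]].
    + intros i Hi%in_seq.
      assert (Hacc : r_EUT bstar - h i bstar * w (Fbar i bstar (BW i)) <= L).
      { apply max_list_ge, in_map_iff; exists i; split; [reflexivity | apply in_seq; lia]. }
      pose proof (HF_range i bstar (BW i) Hb (HBW i ltac:(lia))).
      apply (Finv_winv_lt w Hw_range Hw_incr Hw_surj (Fbar i bstar)
               (fun x => HF_cont i bstar x Hb) (HF_0 i bstar Hb)
               (fun x y => HF_incr i bstar x y Hb)); auto; [apply HBW; lia | lra | lra].
    + rewrite Es in Hinsuff; simpl in Hinsuff.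
      rewrite <- HBWmax in Hs; specialize (Hs Hseq); lra.
  - rewrite revenue_per_user_sub; [exact Hloss |].
    apply not_0_INR; lia.
Qed.
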